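(* If $T \in \mathcal{T}$ has order $n$, then $\gamma_{\rm gr}^t(T) = \frac{2}{3}(n+1)$.
   Context: A leaf is a vertex of degree $1$ and a support vertex is a vertex adjacent to a leaf. Operation $\mathcal{O}_1$: given a tree $T'$ and a support vertex $v$ of $T'$, add a new path $v_1v_2v_3$ (three new vertices) and the edge $vv_1$. The family $\mathcal{T}$ is the smallest family of trees containing the path $P_2$ and closed under operation $\mathcal{O}_1$. $N(v)$ denotes the open neighborhood of $v$. A sequence $S=(v_1,\ldots,v_k)$ of distinct vertices of a graph $G$ without isolated vertices is a legal sequence if $N(v_i)\setminus \bigcup_{j=1}^{i-1} N(v_j)\neq\emptyset$ for every $i\in\{2,\ldots,k\}$, and a total dominating sequence if moreover $\{v_1,\ldots,v_k\}$ is a total dominating set of $G$. $\gamma_{\rm gr}^t(G)$ is the maximum length of a total dominating sequence of $G$. *)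

From mathcomp Require Import all_boot.
Set Implicit Arguments. Unset Strict Implicit. Unset Printing Implicit Defensive.

Definition nbhd (V : finType) (e : rel V) (v : V) : {set V} := [set u | e v u].

Definition deg (V : finType) (e : rel V) (v : V) : nat := #|nbhd e v|.

Definition support_vertex (V : finType) (e : rel V) (v : V) : Prop :=
  exists u, e v u /\ deg e u = 1.

(* The family \mathcal{T}: smallest family containing P_2 and closed under O_1.
   Membership is stated up to isomorphism: any labelled copy counts. *)
Inductive inFamT : forall (V : finType), rel V -> Prop :=
| famT_P2 (V : finType) (e : rel V) :
    #|V| = 2 -> (forall x y, e x y = (x != y)) -> inFamT e
| famT_O1 (V W : finType) (e : rel V) (e' : rel W) (f : V -> W) (v : V)
    (v1 v2 v3 : W) :
    inFamT e ->
    support_vertex e v ->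
    injective f ->
    (forall x, [/\ f x != v1, f x != v2 & f x != v3]) ->
    [/\ v1 != v2, v1 != v3 & v2 != v3] ->
    (forall w, [\/ w = v1, w = v2, w = v3 | exists x, w = f x]) ->
    symmetric e' ->
    (forall x y, e' (f x) (f y) = e x y) ->
    (forall w, e' v1 w = (w == f v) || (w == v2)) ->
    (forall w, e' v2 w = (w == v1) || (w == v3)) ->
    (forall w, e' v3 w = (w == v2)) ->
    inFamT e'.

Definition legal_seq (V : finType) (e : rel V) (s : seq V) : bool :=
  uniq s &&
  [forall i : 'I_(size s), (0 < i) ==>
     [exists u, e (tnth (in_tuple s) i) u && ~~ has (fun w => e w u) (take i s)]].

Definition total_dominating_seq (V : finType) (e : rel V) (s : seq V) : bool :=
  legal_seq e s && [forall x, has (fun w => e w x) s].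

(* Grundy total domination number: maximum length of a total dominating
   sequence (lengths are bounded by #|V| since the entries are distinct;
   the max is 0 if there is none). *)
Definition grundy_total (V : finType) (e : rel V) : nat :=
  \max_(k < #|V|.+1 | [exists s : k.-tuple V, total_dominating_seq e s]) k.

From mathcomp Require Import all_boot zify.
Set Implicit Arguments. Unset Strict Implicit. Unset Printing Implicit Defensive.

(* Each application of O_1 adds three vertices and raises the Grundy total
   domination number by exactly two, which preserves 3 g = 2 (n + 1) from the
   base case P_2.  A total dominating sequence s of T lifts to T' as
   v2, v3, s.  Conversely, a total dominating sequence S of T' projects to T by
   dropping v2 and v3 and reading each copy of a vertex of T as that vertex;
   when v1, v2 and v3 all occur, v1 must footprint v (v3 can only footprint
   v2, which forces v3 before v1), so the copy of the leaf l at v is absent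
   and v1 can be read as l.  Appending l if v is left undominated gives a
   total dominating sequence of T at most two shorter than S. *)

Section Before.
Variable T : eqType.
Implicit Types (s : seq T) (x y : T).

Definition before s x := take (index x s) s.

Lemma before_cons c s x :
  before (c :: s) x = if c == x then [::] else c :: before s x.
Proof. by rewrite /before /=; case: (c == x). Qed.

Lemma mem_before s x y : (x \in before s y) = (index x s < index y s).
Proof.
elim: s => [|c s IH] //; rewrite before_cons /=.
case: (c =P y) => [->|/eqP ncy] /=; first by case: (y == x).
rewrite in_cons IH; case: (c =P x) => [->|/eqP ncx] /=; first by rewrite eqxx.
by rewrite eq_sym (negbTE ncx).
Qed.

Lemma notin_before s x : x \notin before s x.
Proof. by rewrite mem_before ltnn. Qed.

Lemma before_total s x y : x \in s -> y \in s -> x != y ->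
  (x \in before s y) || (y \in before s x).
Proof.
move=> xs ys; apply: contraNT; rewrite !mem_before negb_or -!leqNgt andbC => idx_eq.
by rewrite -(nth_index x xs) -(nth_index x ys) (anti_leq idx_eq).
Qed.

Lemma before_rcons s x y : y \in s -> before (rcons s x) y = before s y.
Proof.
elim: s => [|c s IH] //= ys; rewrite !before_cons.
case: (eqVneq c y) => // ncy; rewrite IH //.
by move: ys; rewrite in_cons eq_sym (negbTE ncy).
Qed.

Lemma before_rcons_last s x : x \notin s -> before (rcons s x) x = s.
Proof.
elim: s => [|c s IH] /=; first by rewrite before_cons eqxx.
by rewrite in_cons negb_or => /andP [ncx xs]; rewrite before_cons eq_sym (negbTE ncx) IH.
Qed.

End Before.

Lemma before_map (T1 T2 : eqType) (f : T1 -> T2) s x : injective f ->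
  before (map f s) (f x) = map f (before s x).
Proof.
move=> f_inj; elim: s => [|c s IH] //=; rewrite !before_cons inj_eq //.
by case: (c == x) => //=; rewrite IH.
Qed.

Lemma before_pmap (T1 T2 : eqType) (h : T1 -> option T2) s w x :
  h w = Some x -> {in s, forall c, h c = Some x -> c = w} ->
  before (pmap h s) x = pmap h (before s w).
Proof.
move=> hw; elim: s => [|c s IH] // h_inj.
case: (c =P w) => [->|/eqP ncw]; first by rewrite /= hw /= !before_cons !eqxx.
rewrite /= before_cons (negbTE ncw).
have {}IH : before (pmap h s) x = pmap h (before s w).
  by apply: IH => c' c's; apply: h_inj; rewrite inE c's orbT.
case E: (h c) => [y|] /=; rewrite E /= -IH //.
rewrite before_cons; case: (y =P x) => // yx.
by move: ncw; rewrite (h_inj c) ?eqxx ?mem_head // E yx.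
Qed.

Section Legal.
Variables (T : finType) (e : rel T).
Implicit Types (s : seq T) (x u : T).

Definition footprints s x u := e x u && ~~ has (fun w => e w u) (before s x).

Definition legal s :=
  uniq s /\ forall x, x \in s -> before s x != [::] -> exists u, footprints s x u.

Lemma legal_seqP s : legal_seq e s <-> legal s.
Proof.
rewrite /legal_seq /legal; split.
  case/andP=> us /forallP Hs; split => // x xs.
  have ix : index x s < size s by rewrite index_mem.
  have := Hs (Ordinal ix); rewrite /= (tnth_nth x) /= nth_index // lt0n.
  move=> /implyP Hx ne; apply/existsP/Hx; apply: contra ne => /eqP i0.
  by rewrite /before i0 take0.
case=> us Hs; rewrite us /=; apply/forallP => i; apply/implyP => i0.
set x := tnth (in_tuple s) i.
have idx : index x s = i by rewrite /x (tnth_nth x) index_uniq.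
have [|u Hu] := Hs x (mem_tnth _ _).
  by rewrite /before idx -size_eq0 size_take ltn_ord -lt0n.
by apply/existsP; exists u; rewrite /footprints /before idx in Hu.
Qed.

Lemma legal_footprint s x : legal s -> x \in s -> (exists y, e x y) ->
  exists u, footprints s x u.
Proof.
case=> _ Hs xs [y exy]; case: (eqVneq (before s x) [::]) => [nil|]; last exact: Hs.
by exists y; rewrite /footprints exy nil.
Qed.

Lemma legal_rcons s x : legal s -> x \notin s ->
  (exists u, e x u && ~~ has (fun w => e w u) s) -> legal (rcons s x).
Proof.
case=> us Hs xs [u Hu]; split; first by rewrite rcons_uniq xs.
move=> y; rewrite mem_rcons in_cons; case: (eqVneq y x) => [->|nyx] /= ys.
  by exists u; rewrite /footprints before_rcons_last.
by rewrite /footprints !before_rcons //; apply: Hs.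
Qed.

Lemma total_dominating_seqP s :
  total_dominating_seq e s <-> legal s /\ forall x, has (fun w => e w x) s.
Proof.
rewrite /total_dominating_seq; split; first by case/andP => /legal_seqP ? /forallP.
by case=> /legal_seqP -> Hd; apply/forallP.
Qed.

Lemma total_dominating_nbr s : symmetric e -> total_dominating_seq e s ->
  forall x, exists y, e x y.
Proof.
move=> e_sym /total_dominating_seqP [_ Hd] x; have /hasP [y _ eyx] := Hd x.
by exists y; rewrite e_sym.
Qed.

Definition max_tds_size m :=
  (exists s, total_dominating_seq e s /\ size s = m) /\
  (forall s, total_dominating_seq e s -> size s <= m).

Lemma grundy_totalE m : max_tds_size m -> grundy_total e = m.
Proof.
move=> [[s [tds <-]] s_max]; apply/eqP; rewrite eqn_leq; apply/andP; split.
  by apply/bigmax_leqP => k /existsP [t /s_max]; rewrite size_tuple.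
have us : uniq s by case/andP: tds => /andP [].
have lt : size s < #|T|.+1 by rewrite ltnS -(card_uniqP us) max_card.
apply: (@leq_bigmax_cond _ _ (fun k => nat_of_ord k) (Ordinal lt)).
by apply/existsP; exists (in_tuple s).
Qed.

End Legal.

Lemma legal_pmap (W V : finType) (e : rel V) (h : W -> option V) (S : seq W) :
  uniq S ->
  {in S &, forall a c x, h a = Some x -> h c = Some x -> a = c} ->
  (forall w x, w \in S -> h w = Some x -> exists u, e x u /\
      forall w' y, w' \in before S w -> h w' = Some y -> ~~ e y u) ->
  legal e (pmap h S).
Proof.
move=> uS h_inj Hfp; split.
  elim: S uS h_inj {Hfp} => [|c S IH] //= /andP [cS uS] h_inj.
  have {}IH : uniq (pmap h S).
    by apply: IH uS _ => a c' aS c'S; apply: h_inj; rewrite in_cons ?aS ?c'S orbT.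
  case E: (h c) => [y|] //=; rewrite IH andbT mem_pmap.
  apply/mapP => [[w wS Ew]].
  by move: cS; rewrite -(h_inj w c _ _ y (esym Ew) E) ?inE ?wS ?eqxx ?orbT.
move=> x; rewrite mem_pmap => /mapP [w wS Ew] _.
have [u [eu Hu]] := Hfp w x wS (esym Ew); exists u; rewrite /footprints eu /=.
rewrite (before_pmap (esym Ew)); last by move=> c cS Ec; apply: (h_inj c w cS wS x).
apply/hasP => [[y]]; rewrite mem_pmap => /mapP [w' w'S Ew'].
by apply/negP; apply: Hu w'S (esym Ew').
Qed.

Section OperationO1.
Variables (V W : finType) (e : rel V) (e' : rel W) (f : V -> W) (v l : V) (v1 v2 v3 : W).
Hypotheses (e_irr : irreflexive e) (e_sym : symmetric e).
Hypotheses (e_vl : e v l) (l_leaf : deg e l = 1).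
Hypotheses (f_inj : injective f) (f_new : forall x, [/\ f x != v1, f x != v2 & f x != v3]).
Hypothesis v_neq : [/\ v1 != v2, v1 != v3 & v2 != v3].
Hypothesis W_cover : forall w, [\/ w = v1, w = v2, w = v3 | exists x, w = f x].
Hypotheses (e'_sym : symmetric e') (e'_f : forall x y, e' (f x) (f y) = e x y).
Hypotheses (e'_v1 : forall w, e' v1 w = (w == f v) || (w == v2))
           (e'_v2 : forall w, e' v2 w = (w == v1) || (w == v3))
           (e'_v3 : forall w, e' v3 w = (w == v2)).

Lemma leaf_nbr z : e l z -> z = v.
Proof.
move=> elz; have /cards1P [y Ey] : #|nbhd e l| == 1 by rewrite -/(deg e l) l_leaf.
have : v \in nbhd e l by rewrite inE e_sym.
have : z \in nbhd e l by rewrite inE.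
by rewrite Ey !inE => /eqP -> /eqP ->.
Qed.

Lemma leaf_neq : l != v.
Proof. by apply: contraTneq e_vl => ->; rewrite e_irr. Qed.

Lemma e'_v1f x : e' v1 (f x) = (x == v).
Proof. by rewrite e'_v1 inj_eq //; case: (f_new x) => _ /negbTE ->; rewrite orbF. Qed.

Lemma e'_v2f x : e' v2 (f x) = false.
Proof. by rewrite e'_v2; case: (f_new x) => /negbTE -> _ /negbTE ->. Qed.

Lemma e'_v3f x : e' v3 (f x) = false.
Proof. by rewrite e'_v3; case: (f_new x) => _ /negbTE -> _. Qed.

Lemma has_e'_map (s : seq V) u :
  has (fun w => e' w (f u)) (map f s) = has (fun w => e w u) s.
Proof. by rewrite has_map; apply: eq_has => w /=; rewrite e'_f. Qed.

Lemma irreflexive_O1 : irreflexive e'.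
Proof.
case: v_neq => n12 _ n23 w; case: (W_cover w) => [->|->|->|[x ->]].
- by rewrite e'_v1 (negbTE n12) eq_sym; case: (f_new v) => /negbTE ->.
- by rewrite e'_v2 eq_sym (negbTE n12) (negbTE n23).
- by rewrite e'_v3 eq_sym (negbTE n23).
- by rewrite e'_f e_irr.
Qed.

Lemma card_O1 : #|W| = #|V| + 3.
Proof.
case: v_neq => n12 n13 n23.
rewrite -(cardC (mem (codom f))) (card_codom f_inj); congr (_ + _).
transitivity #|[:: v1; v2; v3]|; last by apply/card_uniqP; rewrite /= !inE negb_or n12 n13 n23.
apply: eq_card => w; rewrite !inE; case: (W_cover w) => [->|->|->|[x ->]].
- by rewrite eqxx; apply/codomP => [[x E]]; case: (f_new x); rewrite E eqxx.
- by rewrite eqxx orbT; apply/codomP => [[x E]]; case: (f_new x); rewrite E eqxx.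
- by rewrite eqxx !orbT; apply/codomP => [[x E]]; case: (f_new x); rewrite E eqxx.
- by rewrite codom_f; case: (f_new x) => /negbTE -> /negbTE -> /negbTE ->.
Qed.

Lemma tds_O1_extend s :
  total_dominating_seq e s -> total_dominating_seq e' [:: v2, v3 & map f s].
Proof.
move=> tds; have nbr := total_dominating_nbr e_sym tds.
move/total_dominating_seqP: tds => [[us Ls] Ds]; case: v_neq => n12 _ n23.
have vf_notin vi : (forall x, f x != vi) -> vi \notin map f s.
  by move=> fx; apply/mapP => [[x _ /eqP]]; rewrite eq_sym (negbTE (fx x)).
apply/total_dominating_seqP; split; first split.
- by rewrite /= !inE negb_or n23 (map_inj_uniq f_inj) us !vf_notin // => x; case: (f_new x).
- move=> x; rewrite !inE => /orP [/eqP ->|/orP [/eqP ->|]].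
  + by rewrite before_cons eqxx.
  + move=> _; exists v2; rewrite /footprints !before_cons (negbTE n23) eqxx /= e'_v3 eqxx.
    by rewrite e'_v2 (eq_sym v2) (negbTE n12) (negbTE n23).
  + move=> /mapP [y ys ->] _.
    have [u /andP [eyu fresh]] := legal_footprint (conj us Ls) ys (nbr y).
    exists (f u); case: (f_new y) => _ /negbTE n2 /negbTE n3.
    rewrite /footprints e'_f eyu !before_cons eq_sym n2 eq_sym n3 before_map //=.
    by rewrite e'_v2f e'_v3f has_e'_map.
- move=> w; case: (W_cover w) => [->|->|->|[x ->]] /=.
  + by rewrite e'_v2 eqxx.
  + by rewrite e'_v3 eqxx orbT.
  + by rewrite e'_v2 eqxx orbT.
  + by rewrite e'_v2f e'_v3f has_e'_map Ds.
Qed.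

Section Projection.
Variable S : seq W.
Hypothesis S_tds : total_dominating_seq e' S.

Let S_legal : legal e' S. Proof. by case/total_dominating_seqP: S_tds. Qed.
Let S_dom w : has (fun y => e' y w) S. Proof. by case/total_dominating_seqP: S_tds. Qed.
Let e'_nbr : forall w, exists z, e' w z := total_dominating_nbr e'_sym S_tds.

Definition all3_in := [&& v1 \in S, v2 \in S & v3 \in S].

(* [v3] can only footprint [v2], so [v3] precedes [v1], which then cannot footprint [v2]. *)
Lemma v1_footprints_fv : all3_in -> ~~ has (fun w => e' w (f v)) (before S v1).
Proof.
case: v_neq => _ n13 _; case/and3P => i1 _ i3.
have [u3 /andP [e3u fresh3]] := legal_footprint S_legal i3 (e'_nbr v3).
move: e3u fresh3; rewrite e'_v3 => /eqP -> fresh3.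
have n1 : v1 \notin before S v3.
  by apply: contra fresh3 => H; apply/hasP; exists v1; rewrite // e'_v1 eqxx orbT.
have [u1 /andP [e1u fresh1]] := legal_footprint S_legal i1 (e'_nbr v1).
move: e1u; rewrite e'_v1 => /orP [] /eqP Eu; rewrite Eu in fresh1 => //.
have n3 : v3 \notin before S v1.
  by apply: contra fresh1 => H; apply/hasP; exists v3; rewrite // e'_v3 eqxx.
by have := before_total i1 i3 n13; rewrite (negbTE n1) (negbTE n3).
Qed.

Lemma leaf_copy_notin : all3_in -> f l \notin S.
Proof.
move=> all3; have fresh1 := v1_footprints_fv all3; apply/negP => fl.
have i1 : v1 \in S by case/and3P: all3.
have nfl : f l != v1 by case: (f_new l).
case/orP: (before_total fl i1 nfl) => H.
  by move/negP: fresh1; apply; apply/hasP; exists (f l); rewrite //= e'_f e_sym.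
have [u /andP [eu fresh]] := legal_footprint S_legal fl (e'_nbr (f l)).
case: (W_cover u) eu fresh => [->|->|->|[z ->]].
- by rewrite e'_sym e'_v1f (negbTE leaf_neq).
- by rewrite e'_sym e'_v2f.
- by rewrite e'_sym e'_v3f.
- by rewrite e'_f => /leaf_nbr -> /negP; apply; apply/hasP; exists v1; rewrite //= e'_v1f.
Qed.

Definition proj w := if all3_in && (w == v1) then Some l else [pick x | f x == w].

Lemma proj_f x : proj (f x) = Some x.
Proof.
rewrite /proj; case: (f_new x) => /negbTE -> _ _; rewrite andbF.
by case: pickP => [y /eqP /f_inj -> //|/(_ x)]; rewrite eqxx.
Qed.

Lemma proj_new w : (forall x, f x != w) -> w != v1 -> proj w = None.
Proof.
move=> fw n1; rewrite /proj (negbTE n1) andbF.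
by case: pickP => // y /eqP E; have := fw y; rewrite E eqxx.
Qed.

Lemma proj_v1 : proj v1 = if all3_in then Some l else None.
Proof.
rewrite /proj eqxx andbT; case: ifP => // _.
by case: pickP => // y /eqP E; case: (f_new y); rewrite E eqxx.
Qed.

Lemma projP w x : proj w = Some x -> w = f x \/ [/\ all3_in, w = v1 & x = l].
Proof.
rewrite /proj; case: ifP => [/andP [all3 /eqP ->] [<-]|_]; first by right.
by case: pickP => // y /eqP <- [->]; left.
Qed.

Lemma proj_inj_in : {in S &, forall a c x, proj a = Some x -> proj c = Some x -> a = c}.
Proof.
move=> a c aS cS x /projP Ea /projP Ec.
case: Ea Ec aS cS => [->|[all3 -> ->]] [->|[all3' -> E]] // aS cS.
- by move: (leaf_copy_notin all3'); rewrite -E aS.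
- by move: (leaf_copy_notin all3); rewrite cS.
Qed.

Lemma legal_proj : legal e (pmap proj S).
Proof.
case: S_legal => uS _; apply: legal_pmap => //; first exact: proj_inj_in.
move=> w x wS /projP [Ew|[all3 -> ->]]; last first.
  exists v; rewrite e_sym e_vl; split => // w' y w'S /projP [Ew'|[_ Ew' _]].
    apply: contraNN (v1_footprints_fv all3) => eyv.
    by apply/hasP; exists w' => //=; rewrite Ew' e'_f.
  by move: w'S; rewrite Ew' (negbTE (notin_before _ _)).
rewrite {}Ew in wS *.
have [U /andP [eU fresh]] := legal_footprint S_legal wS (e'_nbr (f x)).
case: (W_cover U) eU fresh => [->|->|->|[u ->]].
- rewrite e'_sym e'_v1f => /eqP -> fresh; exists l; split => // w' y w'S.
  case/projP => [Ew'|[_ _ ->]]; last by rewrite e_irr.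
  by apply: contraTN w'S; rewrite e_sym Ew' => /leaf_nbr ->; apply: notin_before.
- by rewrite e'_sym e'_v2f.
- by rewrite e'_sym e'_v3f.
rewrite e'_f => exu fresh; exists u; split => // w' y w'S /projP [Ew'|[_ Ew' ->]].
  by apply: contraNN fresh => eyu; apply/hasP; exists w' => //=; rewrite Ew' e'_f.
apply: contraNN fresh => /leaf_nbr ->.
by apply/hasP; exists w' => //=; rewrite Ew' e'_v1f.
Qed.

Lemma proj_dominates z : z != v -> has (fun y => e y z) (pmap proj S).
Proof.
move=> nzv; have /hasP [w wS ewz] := S_dom (f z).
case: (W_cover w) wS ewz => [->|->|->|[y ->]] wS.
- by rewrite e'_v1f (negbTE nzv).
- by rewrite e'_v2f.
- by rewrite e'_v3f.
rewrite e'_f => eyz; apply/hasP; exists y => //.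
by rewrite mem_pmap -(proj_f y) map_f.
Qed.

(* Only [v2], [v3] and, unless all three new vertices occur, [v1] are dropped. *)
Lemma size_proj : size S <= (size (pmap proj S)).+2.
Proof.
case: S_legal => uS _; case: v_neq => n12 n13 n23.
have proj_v w : w \in [:: v2; v3] -> proj w = None.
  rewrite !inE => /orP [] /eqP -> {w}; apply: proj_new => [x|];
    by [case: (f_new x) | rewrite eq_sym].
have dropped : count (predC (fun w => proj w)) S <= 2.
  rewrite -size_filter.
  pose D := [seq w <- [:: v1; v2; v3] | (w \in S) && ~~ proj w].
  apply: (@leq_trans (size D)).
    apply: uniq_leq_size; first exact: filter_uniq.
    move=> w; rewrite mem_filter /= => /andP [nw wS]; rewrite mem_filter wS nw /=.
    by case: (W_cover w) nw => [->|->|->|[y ->]]; rewrite ?proj_f ?inE ?eqxx ?orbT.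
  rewrite /D /= proj_v1 !proj_v ?inE ?eqxx ?orbT // /all3_in.
  by case: (v1 \in S); case: (v2 \in S); case: (v3 \in S).
by rewrite -(count_predC (fun w => proj w)) size_pmap -addn2 leq_add2l.
Qed.

Lemma tds_O1_project : exists s, total_dominating_seq e s /\ size S <= (size s).+2.
Proof.
have [dom_v|undom_v] := boolP (has (fun y => e y v) (pmap proj S)).
  exists (pmap proj S); split; last exact: size_proj.
  apply/total_dominating_seqP; split; first exact: legal_proj.
  by move=> z; case: (eqVneq z v) => [->|]; last exact: proj_dominates.
exists (rcons (pmap proj S) l); split; last by rewrite size_rcons; apply/leqW/size_proj.
apply/total_dominating_seqP; split.
  apply: legal_rcons legal_proj _ _.
    by apply: contraNN undom_v => ls; apply/hasP; exists l; rewrite // e_sym.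
  by exists v; rewrite e_sym e_vl.
move=> z; rewrite has_rcons; case: (eqVneq z v) => [->|nzv].
  by rewrite e_sym e_vl.
by rewrite proj_dominates ?orbT.
Qed.

End Projection.

Lemma max_tds_size_O1 m : max_tds_size e m -> max_tds_size e' m.+2.
Proof.
case=> [[s [tds <-]] s_max]; split.
  by exists [:: v2, v3 & map f s]; rewrite tds_O1_extend //= size_map.
by move=> S /tds_O1_project [s' [/s_max le_s' le_S]]; apply: leq_trans le_S _.
Qed.

End OperationO1.

Lemma max_tds_size_P2 (V : finType) (e : rel V) :
  #|V| = 2 -> (forall x y, e x y = (x != y)) -> max_tds_size e 2.
Proof.
move=> cV exy; split; last first.
  by move=> s /total_dominating_seqP [[us _] _]; rewrite -cV -(card_uniqP us) max_card.
have : size (enum V) = 2 by rewrite -cardE.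
have := enum_uniq V; have := mem_enum V.
case: (enum V) => [|a [|b []]] // memV /= uab _.
have nab : a != b by move: uab; rewrite inE andbT.
have memV' x : (x == a) || (x == b) by have := memV x; rewrite !inE.
exists [:: a; b]; split => //; apply/total_dominating_seqP; split; first split => //.
  move=> x; rewrite !inE => /orP [] /eqP -> //; first by rewrite before_cons eqxx.
  by exists a; rewrite /footprints !before_cons (negbTE nab) eqxx /= !exy eq_sym nab eqxx.
by move=> x; case/orP: (memV' x) => /eqP -> /=; rewrite !exy ?eqxx ?nab // eq_sym nab.
Qed.

Lemma inFamT_irr_sym (V : finType) (e : rel V) : inFamT e -> irreflexive e /\ symmetric e.
Proof.
elim=> {V e} [V e _ exy|V W e e' f v v1 v2 v3 _ [e_irr _] _ _ f_new v_neq W_cover e'_sym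
  e'_f e'_v1 e'_v2 e'_v3].
  by split=> [x|x y]; rewrite !exy ?eqxx // eq_sym.
by split; first exact: (irreflexive_O1 e_irr f_new v_neq W_cover e'_f e'_v1 e'_v2 e'_v3).
Qed.

Lemma inFamT_max_tds_size (V : finType) (e : rel V) : inFamT e ->
  exists2 m, 3 * m = 2 * (#|V| + 1) & max_tds_size e m.
Proof.
elim=> {V e} [V e cV exy|V W e e' f v v1 v2 v3 Te [m Hm Hmax] [l [e_vl l_leaf]] f_inj
  f_new v_neq W_cover e'_sym e'_f e'_v1 e'_v2 e'_v3].
  by exists 2; [rewrite cV | exact: max_tds_size_P2].
have [e_irr e_sym] := inFamT_irr_sym Te.
exists m.+2; first by rewrite (card_O1 f_inj f_new v_neq W_cover); lia.
exact: (max_tds_size_O1 e_irr e_sym e_vl l_leaf f_inj f_new v_neq W_cover e'_sym e'_f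
  e'_v1 e'_v2 e'_v3 Hmax).
Qed.

Theorem mainTheorem10 (V : finType) (e : rel V) :
  inFamT e -> 3 * grundy_total e = 2 * (#|V| + 1).
Proof. by case/inFamT_max_tds_size => m Hm /grundy_totalE ->. Qed.
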